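(* Let $I\subseteq R$ be a good ideal and let $Q\in\mathbb N$. Then there exists an integer $L(Q)$ such that for every $l\ge L(Q)$ and every $m\in G(I^l)$ there is an index $i\in\{1,\dots,n\}$ with $m=m'\mu_i^Q$ for some $m'\in G(I^{l-Q})$.
   Context: Let $\mathbb K$ be a field, $R=\mathbb K[x_1,\dots,x_n]$, $\mathfrak m=\langle x_1,\dots,x_n\rangle$, $\mathbb N=\{0,1,2,\dots\}$. A monomial $x_1^{\alpha_1}\cdots x_n^{\alpha_n}$ is identified with the point $(\alpha_1,\dots,\alpha_n)\in\mathbb N^n$. For a monomial ideal $I$, $G(I)$ denotes its (unique) minimal monomial generating set. If $I$ is an $\mathfrak m$-primary monomial ideal, then for each $i$ there is a unique $d_i\ge1$ with $x_i^{d_i}\in G(I)$; write $\mu_i=x_i^{d_i}$. For $(a_1,\dots,a_n)\in\mathbb N^n$ the box associated to $I$ is $B_{a_1,\dots,a_n}=([a_1d_1,(a_1+1)d_1]\times\cdots\times[a_nd_n,(a_n+1)d_n])\cap\mathbb N^n$; a monomial belongs to a box if its exponent vector does. An $\mathfrak m$-primary monomial ideal $I$ is called good if for every integer $l\ge1$, every element of $G(I^l)$ belongs to some box $B_{a_1,\dots,a_n}$ with $a_1+\dots+a_n=l-1$. *)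

(* Monomials of K[x_1..x_n] are identified with exponent
   vectors in N^n; a monomial ideal is identified with its (upward closed)
   set of monomials. *)
From mathcomp Require Import all_boot.
Set Implicit Arguments. Unset Strict Implicit. Unset Printing Implicit Defensive.

Definition mon (n : nat) := {ffun 'I_n -> nat}.

Definition mone (n : nat) : mon n := [ffun => 0].
Definition mmul (n : nat) (a b : mon n) : mon n := [ffun i => a i + b i].
Definition xpow (n : nat) (i : 'I_n) (e : nat) : mon n :=
  [ffun j => if j == i then e else 0].
Definition mdiv (n : nat) (a b : mon n) : bool := [forall i, a i <= b i].
Definition mprod (n : nat) (s : seq (mon n)) : mon n := foldr (@mmul n) (mone n) s.

Definition monomial_ideal (n : nat) (I : mon n -> Prop) : Prop :=
  forall a b, I a -> mdiv a b -> I b.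

Definition pow_ideal (n : nat) (I : mon n -> Prop) (l : nat) : mon n -> Prop :=
  fun m => exists s : seq (mon n),
    size s = l /\ (forall g, g \in s -> I g) /\ mdiv (mprod s) m.

(* m belongs to the minimal monomial generating set G(I) *)
Definition mingen (n : nat) (I : mon n -> Prop) (m : mon n) : Prop :=
  I m /\ forall m', I m' -> mdiv m' m -> m' = m.

Definition m_primary (n : nat) (I : mon n -> Prop) : Prop :=
  monomial_ideal I /\ ~ I (mone n) /\ forall i : 'I_n, exists e, I (xpow i e).

Definition in_box (n : nat) (d : 'I_n -> nat) (a : mon n) (m : mon n) : Prop :=
  forall i, a i * d i <= m i <= (a i + 1) * d i.

(* good ideal, with d_i the exponents such that x_i^{d_i} in G(I) *)
Definition good (n : nat) (I : mon n -> Prop) (d : 'I_n -> nat) : Prop :=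
  forall l, 1 <= l -> forall m, mingen (pow_ideal I l) m ->
    exists a : mon n, \sum_(i < n) a i = l - 1 /\ in_box d a m.

From mathcomp Require Import all_boot zify.
From Stdlib Require Import Classical.
Set Implicit Arguments. Unset Strict Implicit. Unset Printing Implicit Defensive.

(* Let I be a good ideal with pure powers x_k^(d_k) in G(I), and let
   D = prod_k d_k.  Give x_k the weight D / d_k, so that each pure power
   x_k^(d_k) has weighted degree D.  Goodness is used only twice:
   - for l = 1: every minimal generator of I lies in the box B_0, i.e. has
     exponents bounded by d;
   - for l = D+1: every monomial g of I has weighted degree >= D, since the
     minimal generator of I^(D+1) dividing g^(D+1) has weighted degree >= D*D.
   Hence D copies of any generator dominate a product of D pure powers.
   Trading such blocks repeatedly, a product of l minimal generators is
   divisible by (pure powers) * (a list in which each of the finitely many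
   bounded generators occurs fewer than D times); the second factor has
   bounded length, so for large l some pure power x_i^(d_i) occurs Q times.
   Dividing a minimal generator m of I^l by x_i^(d_i Q) then yields a
   minimal generator of I^(l-Q). *)

Section Monomials.
Variable n : nat.
Implicit Types a b c m p : mon n.

Definition deg (a : mon n) : nat := \sum_(k < n) a k.

(* the quotient m / b, meaningful when b divides m *)
Definition mquo (a b : mon n) : mon n := [ffun j => a j - b j].

Lemma mdivP a b : reflect (forall i, a i <= b i) (mdiv a b).
Proof. exact: (iffP forallP). Qed.

Lemma mdiv_refl a : mdiv a a.
Proof. by apply/mdivP. Qed.

Lemma mdiv_trans b a c : mdiv a b -> mdiv b c -> mdiv a c.
Proof. by move=> /mdivP ab /mdivP bc; apply/mdivP => i; apply: leq_trans (ab i) _. Qed.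

Lemma mprodE (s : seq (mon n)) i : mprod s i = \sum_(g <- s) g i.
Proof.
elim: s => [|g s IH]; first by rewrite big_nil ffunE.
by rewrite big_cons ffunE -IH.
Qed.

Lemma deg_mmul a b : deg (mmul a b) = deg a + deg b.
Proof. by rewrite /deg -big_split; apply: eq_bigr => k _; rewrite ffunE. Qed.

Lemma deg_xpow (i : 'I_n) e : deg (xpow i e) = e.
Proof.
rewrite /deg (bigD1 i) //= ffunE eqxx big1 ?addn0 // => k /negbTE nki.
by rewrite ffunE nki.
Qed.

Lemma mdiv_xpow (i : 'I_n) e a : e <= a i -> mdiv (xpow i e) a.
Proof. by move=> le_ea; apply/mdivP => j; rewrite ffunE; case: eqP => [->|]. Qed.

Lemma mdiv_mmul a b a' b' : mdiv a a' -> mdiv b b' -> mdiv (mmul a b) (mmul a' b').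
Proof.
move=> /mdivP aa /mdivP bb; apply/mdivP => j; rewrite !ffunE.
exact: leq_add (aa j) (bb j).
Qed.

Lemma mdiv_mmulr a b : mdiv b (mmul a b).
Proof. by apply/mdivP => j; rewrite ffunE leq_addl. Qed.

Lemma mmul_mquo a m : mdiv a m -> mmul (mquo m a) a = m.
Proof. by move=> /mdivP am; apply/ffunP => j; rewrite !ffunE subnK. Qed.

Lemma mdiv_mquo a b m : mdiv (mmul a b) m -> mdiv a (mquo m b).
Proof.
move=> /mdivP abm; apply/mdivP => j; rewrite ffunE leq_subRL.
  by have := abm j; rewrite ffunE addnC.
by have := abm j; rewrite ffunE; apply: leq_trans; rewrite leq_addl.
Qed.

Lemma deg_lt a b : mdiv a b -> a <> b -> deg a < deg b.
Proof.
move=> /mdivP ab ne.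
have [k lt_ab] : exists k, a k < b k.
  apply: NNPP => none; apply: ne; apply/ffunP => k; apply/eqP.
  by rewrite eqn_leq ab leqNgt; apply/negP => lt; apply: none; exists k.
rewrite /deg (bigD1 k) //= [X in _ < X](bigD1 k) //=.
by rewrite -addSn leq_add // leq_sum.
Qed.

(* Every element of a set of monomials is divisible by a minimal element:
   induction on the degree, which strictly drops along proper divisors. *)
Lemma exists_mingen (J : mon n -> Prop) m : J m -> exists2 g, mingen J g & mdiv g m.
Proof.
have [N lt_mN] : exists N, deg m < N by exists (deg m).+1.
elim: N m lt_mN => // N IH m lt_mN Jm.
case: (classic (exists g, [/\ J g, mdiv g m & g <> m])) => [[g [Jg gm ne]]|min_m].
  have [h minh hg] := IH g (leq_trans (deg_lt gm ne) lt_mN) Jg.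
  by exists h => //; apply: mdiv_trans hg gm.
exists m; last exact: mdiv_refl.
split=> // g Jg gm; apply: NNPP => ne; apply: min_m; by exists g.
Qed.

Lemma exists_below b t : t <= deg b -> exists2 c, deg c = t & mdiv c b.
Proof.
elim: t => [|t IH] le_tb.
  exists (mone n); first by apply: big1 => k _; rewrite ffunE.
  by apply/mdivP => k; rewrite ffunE.
have [c deg_c /mdivP cb] := IH (ltnW le_tb).
have [k lt_cb] : exists k, c k < b k.
  apply: NNPP => none; suff: deg b <= deg c by lia.
  by apply: leq_sum => k _; rewrite leqNgt; apply/negP => lt; apply: none; exists k.
exists (mmul c (xpow k 1)); first by rewrite deg_mmul deg_xpow deg_c addn1.
apply/mdivP => j; rewrite !ffunE; case: eqP => [->|_]; first by rewrite addn1.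
by rewrite addn0.
Qed.

Lemma exists_large_exponent p Q : n * Q < deg p -> exists i, Q <= p i.
Proof.
move=> lt_nQ; apply: NNPP => none; suff: deg p <= n * Q by lia.
rewrite -[n in n * Q]card_ord -sum_nat_const; apply: leq_sum => k _.
by apply: ltnW; rewrite ltnNge; apply/negP => le; apply: none; exists k.
Qed.

Lemma bounded_list_size (b c : nat) (r : seq (mon n)) :
  (forall g, g \in r -> forall k, g k <= b) -> (forall x, count_mem x r < c) ->
  size r <= b.+1 ^ n * c.
Proof.
move=> r_le count_lt.
pose code (g : mon n) : {ffun 'I_n -> 'I_b.+1} := [ffun k => inord (g k)].
have code_inj : {in undup r &, injective code}.
  move=> g h; rewrite !mem_undup => /r_le gb /r_le hb /ffunP eq_gh.
  apply/ffunP => k; have := congr1 val (eq_gh k); rewrite !ffunE /=.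
  by rewrite !inordK ?ltnS.
have size_r : size r = \sum_(x <- undup r) count_mem x r.
  rewrite -(perm_size (perm_count_undup r)) size_flatten sumnE !big_map.
  by apply: eq_bigr => x _; rewrite size_nseq.
have: size (undup r) <= b.+1 ^ n.
  rewrite -(size_map code).
  have /card_uniqP <- : uniq (map code (undup r)).
    by rewrite map_inj_in_uniq ?undup_uniq.
  by apply: leq_trans (max_card _) _; rewrite card_ffun !card_ord.
move=> /leq_mul /(_ (leqnn c)); apply: leq_trans.
rewrite size_r -sum1_size big_distrl /=; apply: leq_sum => x _.
by rewrite mul1n ltnW.
Qed.

Lemma mprod_split_count (x : mon n) (r : seq (mon n)) j :
  mprod r j = count_mem x r * x j + mprod (filter (predC1 x) r) j.
Proof.
rewrite !mprodE (bigID (pred1 x)) /= big_filter; congr (_ + _).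
rewrite (eq_bigr (fun _ => x j)) => [|g /eqP -> //].
by rewrite big_const_seq iter_addn_0 mulnC.
Qed.

Section PowerIdeals.
Variable I : mon n -> Prop.

Lemma pow_ideal_prod (s : seq (mon n)) :
  {in s, forall g, I g} -> pow_ideal I (size s) (mprod s).
Proof. by move=> sI; exists s; split; last split; [| exact: sI | exact: mdiv_refl]. Qed.

Lemma pow_ideal_mono l u v : pow_ideal I l u -> mdiv u v -> pow_ideal I l v.
Proof.
by move=> [s [size_s [sI su]]] uv; exists s; do 2!split=> //; apply: mdiv_trans uv.
Qed.

Lemma pow_ideal_mul k l u v :
  pow_ideal I k u -> pow_ideal I l v -> pow_ideal I (k + l) (mmul u v).
Proof.
move=> [s [<- [sI /mdivP su]]] [t [<- [tI /mdivP tv]]].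
apply: (pow_ideal_mono (u := mprod (s ++ t))).
  by rewrite -size_cat; apply: pow_ideal_prod => g; rewrite mem_cat => /orP[/sI|/tI].
apply/mdivP => j; rewrite mprodE big_cat ffunE -!mprodE.
exact: leq_add (su j) (tv j).
Qed.

Lemma mingen_factors (s : seq (mon n)) : (forall g, g \in s -> I g) ->
  exists t, [/\ size t = size s, (forall g, g \in t -> mingen I g)
    & mdiv (mprod t) (mprod s)].
Proof.
elim: s => [|x s IH] sI; first by exists [::]; split=> //; apply: mdiv_refl.
have [t [size_t tG ts]] := IH (fun g gs => sI g (mem_behead (s := x :: s) gs)).
have [g gG gx] := exists_mingen (sI x (mem_head x s)).
exists (g :: t); split=> /=; first by rewrite size_t.
  by move=> h; rewrite inE => /orP[/eqP ->|/tG].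
exact: mdiv_mmul gx ts.
Qed.

Lemma mingen_quotient l Q m b : Q <= l -> mingen (pow_ideal I l) m ->
  pow_ideal I Q b -> mdiv b m -> pow_ideal I (l - Q) (mquo m b) ->
  mingen (pow_ideal I (l - Q)) (mquo m b).
Proof.
move=> le_Ql [_ min_m] Ib bm Imb; split=> // g Ig /mdivP g_mb.
have Igb : pow_ideal I l (mmul g b) by rewrite -(subnK le_Ql); apply: pow_ideal_mul.
have gbm : mdiv (mmul g b) m.
  apply/mdivP => j; move/mdivP: (bm) => /(_ j) bm_j.
  by have := g_mb j; rewrite !ffunE leq_subRL // addnC.
have := min_m _ Igb gbm; rewrite -{1}(mmul_mquo bm) => /ffunP eq_gb.
by apply/ffunP => j; have := eq_gb j; rewrite !ffunE => /addIn.
Qed.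

End PowerIdeals.
End Monomials.

Section GoodIdeal.
Variables (n : nat) (I : mon n -> Prop) (d : 'I_n -> nat).
Hypotheses (hI : m_primary I) (hd : forall i : 'I_n, mingen I (xpow i (d i)))
  (hgood : good I d).
Implicit Types a b c m p : mon n.

(* x^(d*p) = prod_k (x_k^(d_k))^(p_k), a product of deg p pure powers of G(I). *)
Definition pure p : mon n := [ffun j => p j * d j].

Lemma pure_mmul p q : pure (mmul p q) = mmul (pure p) (pure q).
Proof. by apply/ffunP => j; rewrite !ffunE mulnDl. Qed.

Lemma pure_xpow i e : pure (xpow i e) = xpow i (d i * e).
Proof.
by apply/ffunP => j; rewrite !ffunE; case: eqP => [->|_]; rewrite ?mul0n // mulnC.
Qed.

Lemma pow_ideal_pure p : pow_ideal I (deg p) (pure p).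
Proof.
pose s := flatten [seq nseq (p k) (xpow k (d k)) | k <- enum 'I_n].
have -> : deg p = size s.
  rewrite size_flatten sumnE !big_map.
  by apply: eq_bigr => k _; rewrite size_nseq.
apply: pow_ideal_mono (pow_ideal_prod _) _.
  by move=> g /flattenP [s0 /mapP [k _ ->] /nseqP [-> _]]; case: (hd k).
apply/mdivP => j; rewrite mprodE big_flatten big_map ffunE.
rewrite (bigD1_seq j) ?mem_enum ?enum_uniq //= big_nseq iter_addn_0 ffunE eqxx.
rewrite big1 => [|k /negbTE kj]; first by rewrite addn0 mulnC.
by rewrite big_nseq ffunE eq_sym kj iter_addn_0 mul0n.
Qed.

Lemma mingen_pow_ideal1 g : mingen I g -> mingen (pow_ideal I 1) g.
Proof.
have pow1 h : pow_ideal I 1 h -> I h.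
  move=> [s [+ [+ +]]]; case: s => [|x [|]] // _ sI xh.
  apply: hI.1 (sI x (mem_head _ _)) _.
  by apply: mdiv_trans xh; apply/mdivP => j; rewrite !ffunE addn0.
move=> [Ig min_g]; split=> [|h /pow1]; last exact: min_g.
apply: pow_ideal_mono (pow_ideal_prod (s := [:: g]) _) _.
  by move=> h; rewrite inE => /eqP ->.
by apply/mdivP => j; rewrite !ffunE addn0.
Qed.

(* Goodness for l = 1: each minimal generator of I lies in the box B_0. *)
Lemma mingen_le_d g : mingen I g -> forall k, g k <= d k.
Proof.
move=> /mingen_pow_ideal1 /(hgood (leqnn 1)) [a [deg_a box_a]] k.
have /eqP a_k0 : a k == 0.
  by rewrite -leqn0 -(subnn 1) -deg_a /deg (bigD1 k) //= leq_addr.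
by have /andP[_] := box_a k; rewrite a_k0 mul1n.
Qed.

Lemma d_gt0 k : 0 < d k.
Proof.
case: (hd k) => Ixk _; rewrite lt0n; apply/eqP => dk0; apply: hI.2.1.
by congr I: Ixk; apply/ffunP => j; rewrite !ffunE dk0; case: eqP.
Qed.

Definition D : nat := \prod_(k < n) d k.
Definition weight k : nat := D %/ d k.
Definition wdeg a : nat := \sum_(k < n) a k * weight k.

Lemma weightK k : weight k * d k = D.
Proof. by rewrite divnK // /D (bigD1 k) //= dvdn_mulr. Qed.

(* Goodness for l = D+1: every monomial of I has weighted degree >= D.
   Indeed g^(D+1) lies in I^(D+1), so it is divisible by a minimal generator
   in a box B_a with deg a = D, whose weighted degree is >= D * D. *)
Lemma wdeg_ge g : I g -> D <= wdeg g.
Proof.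
move=> Ig; have /exists_mingen [h /(hgood (ltn0Sn D)) [a [deg_a box_a]] /mdivP h_g] :
  pow_ideal I D.+1 (mprod (nseq D.+1 g)).
  rewrite -[in pow_ideal _ _](size_nseq D.+1 g).
  by apply: pow_ideal_prod => x /nseqP [->].
have : D * D <= D.+1 * wdeg g.
  have {}deg_a : deg a = D by rewrite /deg deg_a subSS subn0.
  rewrite -{1}deg_a /deg big_distrl /wdeg big_distrr /=.
  apply: leq_sum => k _; have /andP[ad_h _] := box_a k.
  have := h_g k; rewrite mprodE big_nseq iter_addn_0 => h_gk.
  have := leq_mul (leq_trans ad_h h_gk) (leqnn (weight k)).
  by rewrite -(weightK k); lia.
by nia.
Qed.

Lemma pure_below_block x : I x -> exists2 c, deg c = D & mdiv (pure c) (mprod (nseq D x)).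
Proof.
move=> /wdeg_ge; pose b : mon n := [ffun k => x k * weight k].
have -> : wdeg x = deg b by apply: eq_bigr => k _; rewrite ffunE.
move=> /exists_below [c deg_c /mdivP c_b]; exists c => //.
apply/mdivP => j; rewrite !ffunE mprodE big_nseq iter_addn_0 -(weightK j) mulnA leq_mul2r.
by have := c_b j; rewrite ffunE => ->; rewrite orbT.
Qed.

(* Exchange: a product of monomials of I dominates a product of pure powers
   times a product of original factors, each repeated fewer than D times;
   D repetitions of x are traded for D pure powers by pure_below_block. *)
Lemma exchange s : (forall g, g \in s -> I g) -> exists p r,
  [/\ deg p + size r = size s, {subset r <= s}, (forall x, count_mem x r < D)
    & mdiv (mmul (pure p) (mprod r)) (mprod s)].
Proof.
elim: s => [|x s IH] sI.
  exists (mone n), [::]; split=> //.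
  - by rewrite addn0; apply: big1 => k _; rewrite ffunE.
  - by move=> y; apply: prodn_gt0 => k; apply: d_gt0.
  - by apply/mdivP => j; rewrite !ffunE mul0n.
have [p [r [size_pr r_s r_lt /mdivP prs]]] :=
  IH (fun g gs => sI g (mem_behead (s := x :: s) gs)).
have [lt_xr|le_Dx] := ltnP (count_mem x r).+1 D.
  exists p, (x :: r); split=> /=.
  - by rewrite addnS size_pr.
  - by move=> y; rewrite !inE => /orP[->|/r_s ->]; rewrite ?orbT.
  - by move=> y; case: eqVneq => [<-|_]; rewrite ?add1n ?add0n.
  - by apply/mdivP => j; have := prs j; rewrite !ffunE; lia.
have count_x : (count_mem x r).+1 = D by apply/eqP; rewrite eqn_leq r_lt.
have [c deg_c /mdivP c_x] := pure_below_block (sI x (mem_head x s)).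
exists (mmul p c), (filter (predC1 x) r); split.
- have : count_mem x r + count (predC1 x) r = size r := count_predC (pred1 x) r.
  rewrite deg_mmul size_filter /= -size_pr deg_c -count_x => <-.
  by rewrite addnS addSn addnA.
- by move=> y; rewrite mem_filter => /andP[_ /r_s]; rewrite inE => ->; rewrite orbT.
- move=> y; rewrite count_filter; apply: leq_ltn_trans (r_lt y).
  by apply: sub_count => z /andP[].
apply/mdivP => j; change (mprod (x :: s)) with (mmul x (mprod s)).
have := c_x j; have := prs j.
rewrite !ffunE (mprod_split_count x r) (mprodE (nseq D x)) big_nseq iter_addn_0 -count_x.
lia.
Qed.

(* The number of leftover factors after exchange: generators are bounded by
   d, hence take at most (sum d + 1)^n values, each fewer than D times. *)
Definition exchange_bound : nat := (\sum_(k < n) d k).+1 ^ n * D.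

Lemma decomposition l m : pow_ideal I l m -> exists p r,
  [/\ deg p + size r = l, size r <= exchange_bound, (forall g, g \in r -> I g)
    & mdiv (mmul (pure p) (mprod r)) m].
Proof.
move=> [s [<- [sI sm]]].
have [t [size_t tG ts]] := mingen_factors sI.
have [p [r [size_pr r_t r_lt prt]]] := exchange (fun g gt => (tG g gt).1).
exists p, r; split.
- by rewrite size_pr size_t.
- apply: bounded_list_size r_lt => g /r_t /tG /mingen_le_d g_le k.
  by apply: leq_trans (g_le k) _; rewrite (bigD1 k) //= leq_addr.
- by move=> g /r_t /tG [].
- exact: mdiv_trans prt (mdiv_trans ts sm).
Qed.

End GoodIdeal.

Theorem mainTheorem9 (n : nat) (I : mon n -> Prop) (d : 'I_n -> nat)
  (hI : m_primary I)
  (hd : forall i : 'I_n, mingen I (xpow i (d i)))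
  (hgood : good I d) (Q : nat) :
  exists L : nat, Q <= L /\
    forall l, L <= l -> forall m, mingen (pow_ideal I l) m ->
      exists (i : 'I_n) (m' : mon n),
        mingen (pow_ideal I (l - Q)) m' /\ m = mmul m' (xpow i (d i * Q)).
Proof.
exists (n * Q + Q + exchange_bound d).+1; split=> [|l le_Ll m m_min]; first by lia.
have [p [r [size_pr r_le rI pr_m]]] := decomposition hI hd hgood m_min.1.
have [i le_Qp] : exists i, Q <= p i by apply: exists_large_exponent; lia.
pose b := xpow i (d i * Q); pose p' := mquo p (xpow i Q).
have p_eq : mmul p' (xpow i Q) = p := mmul_mquo (mdiv_xpow le_Qp).
have deg_p' : deg p' + size r = l - Q.
  by move: size_pr; rewrite -p_eq deg_mmul deg_xpow; lia.
have rest_b_m : mdiv (mmul (mmul (pure d p') (mprod r)) b) m.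
  apply: mdiv_trans pr_m; rewrite -p_eq pure_mmul pure_xpow.
  by apply/mdivP => j; rewrite !ffunE; lia.
have b_m : mdiv b m := mdiv_trans (mdiv_mmulr _ _) rest_b_m.
exists i, (mquo m b); split; last by rewrite mmul_mquo.
apply: mingen_quotient => //; first by lia.
  by rewrite /b -[Q in pow_ideal _ Q](deg_xpow i) -pure_xpow; apply: pow_ideal_pure.
apply: pow_ideal_mono (mdiv_mquo rest_b_m); rewrite -deg_p'.
exact: pow_ideal_mul (pow_ideal_pure hd p') (pow_ideal_prod rI).
Qed.
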